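(* Under the standing assumptions (A1)–(A2) below, for every $\varepsilon>0$ there exist $R_2^{\varepsilon}>0$ and $c_7^{\varepsilon}>0$ such that for all $\mathbf{x}\in\mathbb{R}^n$ with $|\mathbf{x}|>R_2^{\varepsilon}$ one has $\mathbf{F}^{\varepsilon}(\mathbf{x})\neq0$ and \[ \Big\langle \mathbf{F}^{\varepsilon}(\mathbf{x}),\tfrac{\mathbf{x}}{|\mathbf{x}|}\Big\rangle<-c_7^{\varepsilon}\,|\mathbf{F}^{\varepsilon}(\mathbf{x})|. \]
   Context: Write points of $\mathbb{R}^n$ as $\mathbf{x}=(x,\mathbf{y})$ with $x\in\mathbb{R}$, $\mathbf{y}\in\mathbb{R}^{n-1}$; $|\cdot|$ is the Euclidean norm and $\langle\cdot,\cdot\rangle$ the Euclidean inner product. Let $\mathbf{F}^{\pm}:\mathbb{R}^n\to\mathbb{R}^n$ be smooth vector fields and define the piecewise-smooth field $\mathbf{F}(\mathbf{x})=\mathbf{F}^+(\mathbf{x})$ if $x>0$, $\mathbf{F}(\mathbf{x})=\mathbf{F}^-(\mathbf{x})$ if $x<0$. Standing assumptions: (A1) (growth) There exist $1<p<\infty$, $R_1,c_1,c_3,c_5>0$ and $c_2,c_4,c_6\in\mathbb{R}$ with $c_5<c_1$ such that for $|\mathbf{x}|>R_1$: $|\mathbf{F}^-(\mathbf{x})|\ge c_1|\mathbf{x}|^p+c_2$ if $x<0$ and $|\mathbf{F}^+(\mathbf{x})|\ge c_1|\mathbf{x}|^p+c_2$ if $x>0$; $|\partial_x\mathbf{F}^-(\mathbf{x})|\le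 c_3|\mathbf{x}|^p+c_4$ if $x<0$ and $|\partial_x\mathbf{F}^+(\mathbf{x})|\le c_3|\mathbf{x}|^p+c_4$ if $x>0$; and $|\mathbf{F}^+(0,\mathbf{y})-\mathbf{F}^-(0,\mathbf{y})|\le c_5|\mathbf{y}|^p+c_6$. (A2) (asymptotically inward-flowing) There exist $R_2,c_7>0$ such that $|\mathbf{x}|>R_2$ implies $\mathbf{F}^{\pm}(\mathbf{x})\neq0$ and $\langle\mathbf{F}^-(\mathbf{x}),\mathbf{x}/|\mathbf{x}|\rangle<-c_7|\mathbf{F}^-(\mathbf{x})|$ if $x\le0$, $\langle\mathbf{F}^+(\mathbf{x}),\mathbf{x}/|\mathbf{x}|\rangle<-c_7|\mathbf{F}^+(\mathbf{x})|$ if $x\ge0$. Mollification: let $\zeta:\mathbb{R}\to\mathbb{R}$ be a smooth, even, nonnegative function supported in $[-1,1]$ with $\int_{\mathbb{R}}\zeta=1$ (e.g. $\zeta(x)=C\exp(1/(x^2-1))$ for $|x|<1$, $0$ otherwise). For $\varepsilon>0$ set $\zeta_\varepsilon(x)=\zeta(x/\varepsilon)/\varepsilon$, and define the mollified field \[ \mathbf{F}^{\varepsilon}(x,\mathbf{y})=\int_{-\varepsilon}^{\varepsilon}\zeta_\varepsilon(u)\Big(\mathbf{F}^-(x-u,\mathbf{y})\mathbb{1}_{\{u\ge x\}}+\mathbf{F}^+(x-u,\mathbf{y})\mathbb{1}_{\{u\le x\}}\Big)\,du . \] *)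

(* R : realType, points of R^n as 'rV[R]_m.+1 (n = m+1). *)
From HB Require Import structures.
From mathcomp Require Import all_boot all_order all_algebra.
From mathcomp Require Import all_classical all_reals all_analysis.
Set Implicit Arguments. Unset Strict Implicit. Unset Printing Implicit Defensive.
Import Order.TTheory GRing.Theory Num.Theory.
Import numFieldNormedType.Exports.
Local Open Scope classical_set_scope.
Local Open Scope ring_scope.

Section Defs.
Variable R : realType.

Definition edot (n : nat) (u v : 'rV[R]_n) : R := \sum_(i < n) u 0 i * v 0 i.
Definition enorm (n : nat) (u : 'rV[R]_n) : R := Num.sqrt (edot u u).

Definition e1 (m : nat) : 'rV[R]_m.+1 := delta_mx 0 0.

Fixpoint dirder (V W : normedModType R) (vs : seq V) (f : V -> W) : V -> W :=
  match vs with
  | [::] => f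
  | v :: vs' => fun x => 'D_v (dirder vs' f) x
  end.

Definition smooth (V W : normedModType R) (f : V -> W) : Prop :=
  forall vs : seq V, continuous (dirder vs f) /\
    (forall (v x : V), derivable (dirder vs f) x v).

Definition zeta_eps (zeta : R -> R) (eps : R) (u : R) : R := zeta (u / eps) / eps.

(* the mollified field F^eps, componentwise Lebesgue integral over [-eps, eps];
   (x - u, y) is the point p - u e_1 *)
Definition Feps (m : nat) (zeta : R -> R) (Fm Fp : 'rV[R]_m.+1 -> 'rV[R]_m.+1)
    (eps : R) (p : 'rV[R]_m.+1) : 'rV[R]_m.+1 :=
  \row_(i < m.+1) Rintegral lebesgue_measure `[- eps, eps]
     (fun u : R => zeta_eps zeta eps u *
        (Fm (p - u *: e1 m) 0 i * (if p 0 0 <= u then 1 else 0) +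
         Fp (p - u *: e1 m) 0 i * (if u <= p 0 0 then 1 else 0))).
End Defs.
Arguments e1 {R} m.

From HB Require Import structures.
From mathcomp Require Import all_boot all_order all_algebra.
From mathcomp Require Import all_classical all_reals all_analysis.
From mathcomp Require Import ring lra.
Set Implicit Arguments. Unset Strict Implicit. Unset Printing Implicit Defensive.
Import Order.TTheory GRing.Theory Num.Theory.
Import numFieldNormedType.Exports.
Local Open Scope classical_set_scope.
Local Open Scope ring_scope.

(* For |p| large, each point p - u e1 (|u| <= eps) sampled by the mollifier lies
   beyond R2, and the shift is small compared with |p|, so the inward-cone
   condition of (A2) at that point still holds in the direction of p, with half the
   aperture.  A cone condition <v, x> <= - k l1(v) stated with the l1 norm survives
   integration, since l1 is subadditive and the field is integrated coordinatewise;
   passing between l1 and Euclidean norms costs a factor n.  Finally the integral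
   of l1 of the integrand is positive (zeta is positive somewhere and F^+- do not
   vanish far out), which makes the inequality strict and F^eps(p) nonzero. *)

Section Euclidean.
Context {R : realType} {n : nat}.
Implicit Types (u v x : 'rV[R]_n) (a b k : R).

Definition l1norm u : R := \sum_(i < n) `|u 0 i|.

Lemma edotC u v : edot u v = edot v u.
Proof. by apply: eq_bigr => i _; rewrite mulrC. Qed.

Lemma edotDl u v x : edot (u + v) x = edot u x + edot v x.
Proof. by rewrite /edot -big_split; apply: eq_bigr => i _; rewrite mxE mulrDl. Qed.

Lemma edotZl a u x : edot (a *: u) x = a * edot u x.
Proof. by rewrite /edot mulr_sumr; apply: eq_bigr => i _; rewrite mxE mulrA. Qed.

Lemma edotDr u v x : edot x (u + v) = edot x u + edot x v.
Proof. by rewrite !(edotC x) edotDl. Qed.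

Lemma edotZr a u x : edot x (a *: u) = a * edot x u.
Proof. by rewrite !(edotC x) edotZl. Qed.

Lemma edotBr u v x : edot x (u - v) = edot x u - edot x v.
Proof. by rewrite edotDr -scaleN1r edotZr mulN1r. Qed.

Lemma edotBl u v x : edot (u - v) x = edot u x - edot v x.
Proof. by rewrite !(edotC _ x) edotBr. Qed.

Lemma edot0l x : edot 0 x = 0.
Proof. by rewrite -(scale0r 0) edotZl mul0r. Qed.

Lemma edotxx_ge0 u : 0 <= edot u u.
Proof. by apply: sumr_ge0 => i _; rewrite -expr2 sqr_ge0. Qed.

Lemma enorm_ge0 u : 0 <= enorm u.
Proof. exact: sqrtr_ge0. Qed.

Lemma enorm_sqr u : enorm u ^+ 2 = edot u u.
Proof. by rewrite sqr_sqrtr// edotxx_ge0. Qed.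

Lemma abs_coord_le_enorm u i : `|u 0 i| <= enorm u.
Proof.
rewrite -sqrtr_sqr ler_sqrt ?edotxx_ge0// /edot (bigD1 i)//= expr2 lerDl.
by apply: sumr_ge0 => j _; rewrite -expr2 sqr_ge0.
Qed.

Lemma abs_coord_le_l1norm u i : `|u 0 i| <= l1norm u.
Proof. by rewrite /l1norm (bigD1 i)//= lerDl; apply: sumr_ge0. Qed.

Lemma l1norm_ge0 u : 0 <= l1norm u.
Proof. exact: sumr_ge0. Qed.

Lemma enorm_le_l1norm u : enorm u <= l1norm u.
Proof.
rewrite -(ger0_norm (l1norm_ge0 u)) -sqrtr_sqr ler_sqrt ?sqr_ge0//.
rewrite /edot expr2 mulr_suml; apply: ler_sum => i _.
by rewrite (le_trans (ler_norm _))// normrM ler_wpM2l// abs_coord_le_l1norm.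
Qed.

Lemma l1norm_le_enorm u : l1norm u <= n%:R * enorm u.
Proof.
apply: le_trans (ler_sum _ (fun i _ => abs_coord_le_enorm u i)) _.
by rewrite sumr_const card_ord mulr_natl.
Qed.

Lemma l1normD u v : l1norm (u + v) <= l1norm u + l1norm v.
Proof. by rewrite -big_split; apply: ler_sum => i _; rewrite mxE ler_normD. Qed.

Lemma l1normZ a u : l1norm (a *: u) = `|a| * l1norm u.
Proof. by rewrite /l1norm mulr_sumr; apply: eq_bigr => i _; rewrite mxE normrM. Qed.

Lemma l1norm0 : l1norm 0 = 0.
Proof. by rewrite -(scale0r 0) l1normZ normr0 mul0r. Qed.

Lemma row_neq0_coord u : u != 0 -> exists i, u 0 i != 0.
Proof.
move=> u0; apply/existsP; apply: contraR u0 => /existsPn ui; apply/eqP/rowP => i.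
by rewrite mxE; apply/eqP/negPn.
Qed.

Lemma edot_le_l1norm k u x : (0 < n)%N -> 0 <= k ->
  edot u x <= - k * enorm u -> edot u x <= - (k / n%:R) * l1norm u.
Proof.
move=> n0 k0 /le_trans; apply; rewrite !mulNr lerN2 -mulrA ler_wpM2l//.
by rewrite ler_pdivrMl ?ltr0n// l1norm_le_enorm.
Qed.

Lemma inward_conic k a b u v x : 0 <= k -> 0 <= a -> 0 <= b ->
  edot u x <= - k * l1norm u -> edot v x <= - k * l1norm v ->
  edot (a *: u + b *: v) x <= - k * l1norm (a *: u + b *: v).
Proof.
move=> k0 a0 b0 hu hv; rewrite edotDl !edotZl.
have := l1normD (a *: u) (b *: v); rewrite !l1normZ !ger0_norm// => hD.
have := ler_wpM2l a0 hu; have := ler_wpM2l b0 hv; nra.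
Qed.

End Euclidean.

Section ShiftAlongE1.
Context {R : realType} {m : nat}.
Implicit Types (p u : 'rV[R]_m.+1) (a : R).

Lemma edot_e1 u : edot u (e1 m) = u 0 0.
Proof.
rewrite /edot (bigD1 ord0)//= big1 => [|j jne]; first by rewrite !mxE mulr1 addr0.
by rewrite !mxE (negPf jne) andbF mulr0.
Qed.

Lemma enorm_subZe1_ge p a : enorm p - `|a| <= enorm (p - a *: e1 m).
Proof.
have [pa|ap] := lerP (enorm p) `|a|.
  by apply: le_trans _ (enorm_ge0 _); rewrite subr_le0.
have pa0 : 0 <= enorm p - `|a| by rewrite subr_ge0 ltW.
rewrite -(ger0_norm pa0) -sqrtr_sqr ler_sqrt ?edotxx_ge0//.
have e1e1 : edot (e1 m) (e1 m) = 1 :> R by rewrite edot_e1 mxE.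
rewrite edotBl !edotBr !edotZl !edotZr.
rewrite edot_e1 (edotC (e1 m)) edot_e1 e1e1 -enorm_sqr.
have : a * p 0 0 <= `|a| * enorm p.
  by rewrite (le_trans (ler_norm _))// normrM ler_wpM2l// abs_coord_le_enorm.
rewrite sqrrB real_normK ?num_real//; nra.
Qed.

Lemma inward_shift_e1 c eps a p F : 0 < c -> 0 < eps -> `|a| <= eps ->
  2 * (c + 1) * eps <= c * enorm p ->
  0 < enorm (p - a *: e1 m) ->
  edot F ((enorm (p - a *: e1 m))^-1 *: (p - a *: e1 m)) < - c * enorm F ->
  edot F ((enorm p)^-1 *: p) <= - (c / 2) * enorm F.
Proof.
set q := p - a *: e1 m => c0 eps0 aeps pbig q0 Fq.
have p0 : 0 < enorm p by rewrite -(pmulr_rgt0 _ c0); apply: lt_le_trans pbig; nra.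
have nF := enorm_ge0 F.
have {}Fq : edot F q <= - c * enorm q * enorm F.
  move: Fq; rewrite edotZr -(ltr_pM2l q0) mulrA divff ?gt_eqF// mul1r; nra.
have Fa : a * F 0 0 <= eps * enorm F.
  by rewrite (le_trans (ler_norm _))// normrM ler_pM// abs_coord_le_enorm.
have qp : enorm p - eps <= enorm q by apply: le_trans (enorm_subZe1_ge p a); lra.
have Fp : edot F p <= - (c / 2) * enorm p * enorm F.
  have -> : edot F p = edot F q + a * F 0 0.
    by rewrite edotBr edotZr edot_e1 subrK.
  have h1 : c * (enorm p - eps) * enorm F <= c * enorm q * enorm F.
    by rewrite ler_wpM2r// ler_wpM2l// ltW.
  have h2 : (c + 1) * eps * enorm F <= c / 2 * enorm p * enorm F.
    by rewrite ler_wpM2r//; lra.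
  nra.
by rewrite edotZr -(ler_pM2l p0) mulrA divff ?gt_eqF// mul1r mulrCA mulrA.
Qed.

End ShiftAlongE1.

Section RealIntegrable.
Context {d : measure_display} {T : measurableType d} {R : realType}.
Variable mu : {measure set T -> \bar R}.
Variable D : set T.
Hypothesis mD : measurable D.

Lemma integrable_mulr (f : T -> R) k : mu.-integrable D (EFin \o f) ->
  mu.-integrable D (EFin \o fun u => f u * k).
Proof. by move=> /(integrableZr mD k); apply: eq_integrable. Qed.

Lemma integrable_mull (f : T -> R) k : mu.-integrable D (EFin \o f) ->
  mu.-integrable D (EFin \o fun u => k * f u).
Proof.
by move=> /(integrable_mulr k); apply: eq_integrable => // u _; rewrite /= mulrC.
Qed.

Variables (I : Type) (f : I -> T -> R).
Hypothesis f_int : forall i, mu.-integrable D (EFin \o f i).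

Lemma integrable_sumr (s : seq I) :
  mu.-integrable D (EFin \o fun u => \sum_(i <- s) f i u).
Proof.
have := @integrable_sum _ _ _ mu D mD I s xpredT (fun i u => (f i u)%:E) (fun i _ => f_int i).
by apply: eq_integrable => // u _; rewrite /= sumEFin.
Qed.

Lemma Rintegral_sum (s : seq I) :
  \int[mu]_(u in D) \sum_(i <- s) f i u = \sum_(i <- s) \int[mu]_(u in D) f i u.
Proof.
elim: s => [|i s IH].
  by under eq_Rintegral do rewrite big_nil; rewrite big_nil Rintegral_cst// mul0r.
under eq_Rintegral do rewrite big_cons.
by rewrite big_cons RintegralD// ?IH//; exact: integrable_sumr.
Qed.

End RealIntegrable.

Section RowIntegral.
Context {d : measure_display} {T : measurableType d} {R : realType}.
Variable mu : {measure set T -> \bar R}.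
Context {n : nat}.
Variables (D : set T) (g : T -> 'rV[R]_n).
Hypotheses (mD : measurable D)
  (g_int : forall i, mu.-integrable D (EFin \o fun u => g u 0 i)).

Definition Rintegral_row : 'rV[R]_n := \row_i \int[mu]_(u in D) g u 0 i.

Lemma integrable_edot x : mu.-integrable D (EFin \o fun u => edot (g u) x).
Proof. by apply: integrable_sumr => // i; apply: integrable_mulr. Qed.

Lemma integrable_l1norm : mu.-integrable D (EFin \o fun u => l1norm (g u)).
Proof. by apply: integrable_sumr => // i; apply: integrable_norm. Qed.

Lemma edot_Rintegral_row x :
  edot Rintegral_row x = \int[mu]_(u in D) edot (g u) x.
Proof.
rewrite Rintegral_sum//; last by move=> i; apply: integrable_mulr.
by apply: eq_bigr => i _; rewrite mxE RintegralZr.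
Qed.

Lemma l1norm_Rintegral_row_le :
  l1norm Rintegral_row <= \int[mu]_(u in D) l1norm (g u).
Proof.
rewrite Rintegral_sum//; last by move=> i; apply: integrable_norm.
by apply: ler_sum => i _; rewrite mxE le_normr_Rintegral.
Qed.

Lemma Rintegral_row_inward k x : 0 < k ->
  (forall u, D u -> edot (g u) x <= - k * l1norm (g u)) ->
  0 < \int[mu]_(u in D) l1norm (g u) ->
  Rintegral_row != 0 /\ edot Rintegral_row x < - (k / 2) * enorm Rintegral_row.
Proof.
move=> k0 gx I0; set I := \int[mu]_(u in D) _ in I0.
have hx : edot Rintegral_row x <= - k * I.
  rewrite edot_Rintegral_row -RintegralZl//; last exact: integrable_l1norm.
  by apply: le_Rintegral => //; [exact: integrable_edot |
    exact: integrable_mull integrable_l1norm].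
have hn : enorm Rintegral_row <= I.
  exact: le_trans (enorm_le_l1norm _) l1norm_Rintegral_row_le.
split; last by nra.
by apply/eqP => F0; move: hx; rewrite F0 edot0l; nra.
Qed.

End RowIntegral.

Lemma exists_ball_itv_neq {R : realType} (u0 r eps c : R) :
  0 < r -> 0 < eps -> `|u0| <= eps ->
  exists u1, [/\ ball u0 r u1, `|u1| < eps & u1 != c].
Proof.
move=> r0 eps0; rewrite ler_norml => /andP[u0l u0r].
have mr : Num.min r eps <= r by rewrite ge_min lexx.
have me : Num.min r eps <= eps by rewrite ge_min lexx orbT.
have m0 : 0 < Num.min r eps by rewrite lt_min r0 eps0.
pose s := Num.min r eps / 2.
have [s0 sr se] : [/\ 0 < s, s < r & s <= eps / 2] by rewrite /s; split; lra.
pose d := if 0 <= u0 then - s else s.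
have near t : 0 < t <= 1 -> ball u0 r (u0 + t * d) /\ `|u0 + t * d| < eps.
  rewrite /ball /= /d => /andP[t0 t1]; case: ifP => u0s; rewrite !ltr_norml; nra.
have [ud|ud] := eqVneq (u0 + d) c.
  have [? ?] := near (1 / 2) ltac:(lra); exists (u0 + 1 / 2 * d); split => //.
  by rewrite -ud; apply/eqP => /addrI /eqP; rewrite /d; case: ifP => _; lra.
by have := near 1 ltac:(lra); rewrite mul1r => -[? ?]; exists (u0 + d).
Qed.

Section PositiveIntegral.
Context {R : realType}.
Local Notation mu := (@lebesgue_measure R).

Lemma Rintegral_gt0_near (D : set (measurableTypeR R)) (g h : R -> R) (u1 r : R) :
  measurable D -> mu.-integrable D (EFin \o g) -> (forall u, D u -> 0 <= g u) ->
  0 < r -> {for u1, continuous h} -> 0 < h u1 ->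
  (forall u, ball u1 r u -> D u /\ h u <= g u) ->
  0 < \int[mu]_(u in D) g u.
Proof.
move=> mD gint g0 r0 hc h0 hg.
have [d d0 ballD] : exists2 d, 0 < d & ball u1 d `<=` D `&` [set u | h u1 / 2 <= g u].
  have h2 : h u1 / 2 < h u1 by lra.
  have [d d0 hd] := (nbhs_ballP _ _).1 (cvgr_gt (h u1) hc _ h2).
  exists (Num.min d r); first by rewrite lt_min d0 r0.
  move=> u; rewrite /ball /= lt_min => /andP[ud ur].
  have [Du hgu] := hg u ur; split=> //; rewrite /= (le_trans _ hgu)// ltW//.
  exact: hd.
have mg := measurable_int _ gint.
have mball : measurable (ball u1 d : set (measurableTypeR R)) :=
  measurable_realfun.measurable_ball u1 d.
rewrite /Rintegral fine_gt0// ltey_eq (integrable_fin_num mD gint) andbT.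
apply: (@lt_le_trans _ _ (\int[mu]_(u in ball u1 d) (h u1 / 2)%:E)%E).
  rewrite integral_cst//.
  rewrite [X in (_ * X)%E](_ : _ = (d *+ 2)%:E); last exact: lebesgue_measure_ball (ltW d0).
  by rewrite -EFinM lte_fin mulr_gt0// ?pmulrn_rgt0//; lra.
apply: le_trans (ge0_subset_integral mu mball mD mg _ _); last 2 first.
- by move=> u /g0; rewrite lee_fin.
- by move=> u /ballD[].
apply: ge0_le_integral => //; first by move=> ? _; rewrite lee_fin; nra.
- by apply: measurable_funS mg => // u /ballD[].
- by move=> u /ballD[]; rewrite /= lee_fin.
Qed.

Lemma integrable_itv_step (a b c : R) (f : R -> R) : continuous f ->
  mu.-integrable `[a, b] (EFin \o fun u => if c <= u then f u else 0) /\
  mu.-integrable `[a, b] (EFin \o fun u => if u <= c then f u else 0).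
Proof.
move=> f_cont.
have mD : measurable (`[a, b] : set (measurableTypeR R)) by exact: measurable_itv.
have f_int : mu.-integrable `[a, b] (EFin \o f).
  apply: continuous_compact_integrable; first exact: segment_compact.
  exact: continuous_subspaceT.
have step (P : R -> bool) : measurable_fun `[a, b] (fun u => if P u then 1 else 0 : R) ->
    mu.-integrable `[a, b] (EFin \o fun u => if P u then f u else 0).
  move=> mP; have Pbd : [bounded (if P u then 1 else 0 : R) | u in `[a, b]].
    exists 1; split; first by rewrite num_real.
    by move=> M M1 u _; apply: le_trans (ltW M1); case: ifP; rewrite (normr1, normr0).
  have := integrableMr mD mP Pbd f_int; apply: eq_integrable => // u _.
  by rewrite /= -EFinM; case: (P u); rewrite (mul1r, mul0r).
by split; apply: step; apply: measurable_fun_if => //;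
  apply: measurable_realfun.measurable_fun_ler.
Qed.

Lemma integral_eq1_exists_gt0 (f : R -> R) :
  (forall u, 0 <= f u) -> (forall u, 1 < `|u| -> f u = 0) ->
  (\int[mu]_(u in [set: R]) (f u)%:E = 1)%E ->
  exists2 t, `|t| <= 1 & 0 < f t.
Proof.
move=> f_ge0 f_supp f_int1.
have [[t ft]|f0] := pselect (exists t, f t != 0).
  exists t; last by rewrite lt_def ft f_ge0.
  by rewrite leNgt; apply: contra ft => /f_supp ->.
move: f_int1; rewrite (eq_integral (fun=> 0%E)) ?integral0 => [/eqP|u _].
  by rewrite eq_sym eqe oner_eq0.
by apply/eqP; rewrite eqe; apply: contra_notT f0 => ?; exists u.
Qed.

End PositiveIntegral.

Section MollifiedField.
Context {R : realType} {m : nat}.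
Local Notation mu := (@lebesgue_measure R).
Variables (Fm Fp : 'rV[R]_m.+1 -> 'rV[R]_m.+1) (zeta : R -> R) (eps : R).
Hypotheses (Fm_cont : continuous Fm) (Fp_cont : continuous Fp)
  (zeta_cont : continuous zeta) (zeta_ge0 : forall u, 0 <= zeta u) (eps_gt0 : 0 < eps).

Local Notation w := (zeta_eps zeta eps).

Definition mollifier_integrand (p : 'rV[R]_m.+1) (u : R) : 'rV[R]_m.+1 :=
  w u *: (if p 0 0 <= u then Fm (p - u *: e1 m) else 0) +
  w u *: (if u <= p 0 0 then Fp (p - u *: e1 m) else 0).

Lemma FepsE p :
  Feps zeta Fm Fp eps p = Rintegral_row mu `[- eps, eps] (mollifier_integrand p).
Proof.
apply/rowP => i; rewrite !mxE; apply: eq_Rintegral => u _.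
by rewrite !mxE; case: ifP => _; case: ifP => _; rewrite ?mxE; ring.
Qed.

Lemma zeta_eps_ge0 u : 0 <= w u.
Proof. by rewrite /zeta_eps divr_ge0// ltW. Qed.

Lemma continuous_zeta_eps : continuous w.
Proof.
move=> u; rewrite /zeta_eps.
apply: (@continuousM _ _ (fun u : R => zeta (u / eps)) (fun=> eps^-1));
  last exact: cst_continuous.
apply: (continuous_comp (f := fun u : R => u / eps)); last exact: zeta_cont.
by apply: (@continuousM _ _ id (fun=> eps^-1)); last exact: cst_continuous.
Qed.

Lemma continuous_shifted_coord (G : 'rV[R]_m.+1 -> 'rV[R]_m.+1) p i :
  continuous G -> continuous (fun u : R => G (p - u *: e1 m) 0 i).
Proof.
move=> G_cont u.
apply: (@continuous_comp _ _ _ (fun u : R => G (p - u *: e1 m)) (fun M => M 0 i));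
  last exact: coord_continuous.
apply: (@continuous_comp _ _ _ (fun u : R => p - u *: e1 m) G); last exact: G_cont.
apply: (@continuousB _ _ _ (cst p) (fun u : R => u *: e1 m)); first exact: cst_continuous.
exact: continuousZr_tmp.
Qed.

Lemma integrable_mollifier_integrand p i :
  mu.-integrable `[- eps, eps] (EFin \o fun u => mollifier_integrand p u 0 i).
Proof.
have mD : measurable (`[- eps, eps] : set (measurableTypeR R)) by exact: measurable_itv.
have wG_cont (G : 'rV[R]_m.+1 -> 'rV[R]_m.+1) :
    continuous G -> continuous (fun u => w u * G (p - u *: e1 m) 0 i).
  move=> G_cont u; apply: (continuousM (s := w)); first exact: continuous_zeta_eps.
  exact: continuous_shifted_coord.
have [Fm_int _] := integrable_itv_step (- eps) eps (p 0 0) (wG_cont _ Fm_cont).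
have [_ Fp_int] := integrable_itv_step (- eps) eps (p 0 0) (wG_cont _ Fp_cont).
have := integrableD mD Fm_int Fp_int; apply: eq_integrable => // u _.
by rewrite /= -EFinD !mxE; case: ifP => _; case: ifP => _; rewrite ?mxE ?mulr0.
Qed.

Lemma mollifier_integrand_inward (R2 c7 : R) p u : 0 <= R2 -> 0 < c7 ->
  (forall q, R2 < enorm q -> q 0 0 <= 0 ->
     edot (Fm q) ((enorm q)^-1 *: q) < - c7 * enorm (Fm q)) ->
  (forall q, R2 < enorm q -> 0 <= q 0 0 ->
     edot (Fp q) ((enorm q)^-1 *: q) < - c7 * enorm (Fp q)) ->
  R2 + eps < enorm p -> 2 * (c7 + 1) * eps <= c7 * enorm p -> `|u| <= eps ->
  edot (mollifier_integrand p u) ((enorm p)^-1 *: p)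
    <= - (c7 / 2 / m.+1%:R) * l1norm (mollifier_integrand p u).
Proof.
move=> R2_ge0 c7_gt0 Fm_in Fp_in p_big p_far u_le.
set q := p - u *: e1 m.
have q_big : R2 < enorm q by have := enorm_subZe1_ge p u; lra.
have q00 : q 0 0 = p 0 0 - u by rewrite !mxE /= mulr1.
have cut (b : bool) (F : 'rV[R]_m.+1) :
    (b -> edot F ((enorm q)^-1 *: q) < - c7 * enorm F) ->
    edot (if b then F else 0) ((enorm p)^-1 *: p)
      <= - (c7 / 2 / m.+1%:R) * l1norm (if b then F else 0).
  case: b => [/(_ isT) F_in|_]; last by rewrite edot0l l1norm0 mulr0.
  apply: edot_le_l1norm => //; first by rewrite divr_ge0// ltW.
  exact: inward_shift_e1 c7_gt0 eps_gt0 u_le p_far (le_lt_trans R2_ge0 q_big) F_in.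
apply: inward_conic; [by rewrite !divr_ge0// ltW | exact: zeta_eps_ge0 |
  exact: zeta_eps_ge0 | apply: cut => side ..].
- by apply: Fm_in; rewrite // q00 subr_le0.
- by apply: Fp_in; rewrite // q00 subr_ge0.
Qed.

Lemma mollifier_integrand_one_sided (p : 'rV[R]_m.+1) (u1 : R) : u1 != p 0 0 ->
  exists2 G : 'rV[R]_m.+1 -> 'rV[R]_m.+1, G = Fm \/ G = Fp &
    forall u, ball u1 `|p 0 0 - u1| u -> mollifier_integrand p u = w u *: G (p - u *: e1 m).
Proof.
rewrite /ball /= neq_lt => /orP[] u1p; [exists Fp; first by right | exists Fm; first by left] => u;
  rewrite /mollifier_integrand.
- rewrite [`|p 0 0 - u1|]gtr0_norm ?subr_gt0// ltr_norml => /andP[? ?].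
  have up : u < p 0 0 by lra.
  by rewrite leNgt up (ltW up) /= scaler0 add0r.
- rewrite [`|p 0 0 - u1|]distrC [`|u1 - p 0 0|]gtr0_norm ?subr_gt0// ltr_norml => /andP[? ?].
  have pu : p 0 0 < u by lra.
  by rewrite (ltW pu) [u <= _]leNgt pu /= scaler0 addr0.
Qed.

(* The point [u1] is taken off the jump [u = p 0 0], where both one-sided terms of
   the integrand are present and could cancel. *)
Lemma mollifier_integrand_l1norm_gt0 (R2 t0 : R) p :
  0 < zeta t0 -> `|t0| <= 1 ->
  (forall q, R2 < enorm q -> Fm q != 0 /\ Fp q != 0) ->
  R2 + eps < enorm p ->
  0 < \int[mu]_(u in `[- eps, eps]) l1norm (mollifier_integrand p u).
Proof.
move=> zeta_t0 t0_le F_nz p_big.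
have u0_le : `|eps * t0| <= eps.
  by rewrite normrM gtr0_norm// -[X in _ <= X]mulr1 ler_wpM2l// ltW.
have w_u0 : 0 < w (eps * t0).
  by rewrite /zeta_eps [eps * t0]mulrC mulfK ?gt_eqF// divr_gt0.
have [r r0 w_pos] := (nbhs_ballP _ _).1 (cvgr_gt _ (@continuous_zeta_eps _) _ w_u0).
have [u1 [/w_pos w_u1 u1_lt u1_neq]] := exists_ball_itv_neq (p 0 0) r0 eps_gt0 u0_le.
have [G GF G_side] := mollifier_integrand_one_sided u1_neq.
have G_cont : continuous G by case: GF => ->.
have q1_big : R2 < enorm (p - u1 *: e1 m) by have := enorm_subZe1_ge p u1; lra.
have [i Gi] : exists i, G (p - u1 *: e1 m) 0 i != 0.
  by apply: row_neq0_coord; case: GF (F_nz _ q1_big) => -> [].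
pose rho := Num.min `|p 0 0 - u1| (eps - `|u1|).
have rho0 : 0 < rho by rewrite lt_min normr_gt0 subr_eq0 eq_sym u1_neq subr_gt0.
have mD : measurable (`[- eps, eps] : set (measurableTypeR R)) by exact: measurable_itv.
apply: (Rintegral_gt0_near (h := fun u => w u * `|G (p - u *: e1 m) 0 i|)
  (u1 := u1) (r := rho)) => //.
- by apply: integrable_l1norm => //; exact: integrable_mollifier_integrand.
- by move=> u _; apply: l1norm_ge0.
- apply: (@continuousM _ _ w); first exact: continuous_zeta_eps.
  have coord_cont := @continuous_shifted_coord G p i G_cont u1.
  exact: continuous_comp coord_cont (@norm_continuous _ R^o _).
- by rewrite mulr_gt0 ?normr_gt0.
move=> u; rewrite /ball /= lt_min => /andP[u_side u_near].
rewrite G_side// l1normZ (ger0_norm (zeta_eps_ge0 u)); split.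
  rewrite /= in_itv /= -ler_norml.
  by have := ler_normD u1 (u - u1); rewrite addrC subrK distrC; lra.
by apply: ler_wpM2l; [exact: zeta_eps_ge0 | exact: abs_coord_le_l1norm].
Qed.

End MollifiedField.

Unset Implicit Arguments.

Theorem lemma3p2 (R : realType) (m : nat)
  (Fm Fp : 'rV[R]_m.+1 -> 'rV[R]_m.+1) (zeta : R -> R)
  (* F^- and F^+ smooth *)
  (hFm : smooth Fm) (hFp : smooth Fp)
  (* mollifier: smooth, even, nonnegative, supported in [-1,1], integral 1 *)
  (hz_smooth : smooth (zeta : R^o -> R^o))
  (hz_even : forall u, zeta (- u) = zeta u)
  (hz_nonneg : forall u, 0 <= zeta u)
  (hz_supp : forall u, 1 < `|u| -> zeta u = 0)
  (hz_int : (\int[lebesgue_measure]_(u in [set: R]) (zeta u)%:E = 1)%E)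
  (* (A1) growth *)
  (pp R1 c1 c2 c3 c4 c5 c6 : R)
  (hpp : 1 < pp) (hR1 : 0 < R1) (hc1 : 0 < c1) (hc3 : 0 < c3) (hc5 : 0 < c5)
  (hc51 : c5 < c1)
  (hA1m : forall p : 'rV[R]_m.+1, R1 < enorm p -> p 0 0 < 0 ->
     c1 * enorm p `^ pp + c2 <= enorm (Fm p))
  (hA1p : forall p : 'rV[R]_m.+1, R1 < enorm p -> 0 < p 0 0 ->
     c1 * enorm p `^ pp + c2 <= enorm (Fp p))
  (hA1dm : forall p : 'rV[R]_m.+1, R1 < enorm p -> p 0 0 < 0 ->
     enorm ('D_(e1 m) Fm p) <= c3 * enorm p `^ pp + c4)
  (hA1dp : forall p : 'rV[R]_m.+1, R1 < enorm p -> 0 < p 0 0 ->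
     enorm ('D_(e1 m) Fp p) <= c3 * enorm p `^ pp + c4)
  (hA1jump : forall p : 'rV[R]_m.+1, R1 < enorm p -> p 0 0 = 0 ->
     enorm (Fp p - Fm p) <= c5 * enorm p `^ pp + c6)
  (* (A2) asymptotically inward-flowing *)
  (R2 c7 : R) (hR2 : 0 < R2) (hc7 : 0 < c7)
  (hA2nz : forall p : 'rV[R]_m.+1, R2 < enorm p -> Fm p != 0 /\ Fp p != 0)
  (hA2m : forall p : 'rV[R]_m.+1, R2 < enorm p -> p 0 0 <= 0 ->
     edot (Fm p) ((enorm p)^-1 *: p) < - c7 * enorm (Fm p))
  (hA2p : forall p : 'rV[R]_m.+1, R2 < enorm p -> 0 <= p 0 0 ->
     edot (Fp p) ((enorm p)^-1 *: p) < - c7 * enorm (Fp p)) :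
  forall eps : R, 0 < eps ->
    exists R2e c7e : R, 0 < R2e /\ 0 < c7e /\
      forall p : 'rV[R]_m.+1, R2e < enorm p ->
        Feps zeta Fm Fp eps p != 0 /\
        edot (Feps zeta Fm Fp eps p) ((enorm p)^-1 *: p)
          < - c7e * enorm (Feps zeta Fm Fp eps p).
Proof.
(* Only continuity of F^+-, zeta and (A2) are needed: (A1) and evenness are unused. *)
move=> eps eps_gt0.
have Fm_cont : continuous Fm := (hFm [::]).1.
have Fp_cont : continuous Fp := (hFp [::]).1.
have zeta_cont : continuous zeta := (hz_smooth [::]).1.
have [t0 t0_le zeta_t0] := integral_eq1_exists_gt0 hz_nonneg hz_supp hz_int.
pose k := c7 / 2 / m.+1%:R.
have k_gt0 : 0 < k by rewrite !divr_gt0.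
exists (Num.max (R2 + eps) (2 * (c7 + 1) * eps / c7)), (k / 2).
split; first by rewrite lt_max addr_gt0.
split=> [|p]; first by rewrite divr_gt0.
rewrite gt_max ltr_pdivrMr// [enorm p * _]mulrC => /andP[p_big /ltW p_far].
rewrite FepsE; apply: Rintegral_row_inward => //.
- exact: integrable_mollifier_integrand.
- move=> u; rewrite /= in_itv /= -ler_norml.
  exact: (mollifier_integrand_inward hz_nonneg eps_gt0 (ltW hR2) hc7 hA2m hA2p p_big p_far).
- exact: (mollifier_integrand_l1norm_gt0 Fm_cont Fp_cont zeta_cont hz_nonneg eps_gt0
    zeta_t0 t0_le hA2nz p_big).
Qed.
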